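(* Let $\ell$ and $m$ be positive integers with $\ell\le m$, let $G$ be a group written additively, let $\mathbf{a}=(a_1,\dots,a_m)$ be a sequence of elements of $G$, and let $A$ be the set of distinct terms of $\mathbf{a}$. Then \[ |\Sigma^{\ell}(\mathbf{a})|\ \ge\ \min\Big(p(G),\ \sum_{a\in A}\mu_{\mathbf{a}}(a)-\ell+1\Big). \]
   Context: $p(G)$ is the order of the smallest nontrivial subgroup of $G$, or $\infty$ if no such subgroup exists. $\Sigma^{\ell}(\mathbf{a})$ is the set of all elements $a_{i_1}+\cdots+a_{i_\ell}$ with $i_1,\dots,i_\ell\in[1,m]$ pairwise distinct, taken in any order. $\rho_a(\mathbf{a})=|\{i\in[1,m]:a_i=a\}|$ and $\mu_{\mathbf{a}}(a)=\min(\ell,\rho_a(\mathbf{a}))$. *)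

(* The group G is a (possibly infinite, possibly
   non-abelian) group, modelled by MathComp's [groupType] from
   boot/monoid.v; the paper's additive notation a + b is rendered as the
   group law [mul a b], and 0 as [one]. *)
From mathcomp Require Import all_boot.
Set Implicit Arguments.
Unset Strict Implicit.
Unset Printing Implicit Defensive.

Definition fin_nontriv_subgroup (G : groupType) (s : seq G) : Prop :=
  [/\ uniq s, group_closed [pred x | x \in s] & has (fun x => x != one) s].

(* [is_pG G p] : p is p(G), the order of the smallest nontrivial subgroup
   of G; [None] encodes p(G) = infinity (no nontrivial subgroup of finite
   order; infinite subgroups have infinite order). *)
Definition is_pG (G : groupType) (p : option nat) : Prop :=
  match p with
  | Some n => (exists s : seq G, fin_nontriv_subgroup s /\ size s = n) /\
              (forall s : seq G, fin_nontriv_subgroup s -> n <= size s)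
  | None => forall s : seq G, ~ fin_nontriv_subgroup s
  end.

Definition min_opt (p : option nat) (k : nat) : nat :=
  match p with Some n => minn n k | None => k end.

(* Sigma^l(a): all sums a_{i_1} + ... + a_{i_l} with i_1, ..., i_l pairwise
   distinct indices, in any order (the order being i_1, ..., i_l), as a
   duplicate-free list. *)
Definition sigma_l (G : groupType) (m l : nat) (a : 'I_m -> G) : seq G :=
  undup [seq \big[mul/one]_(k < l) a (f k)
        | f : {ffun 'I_l -> 'I_m} <- enum {ffun 'I_l -> 'I_m}
        & injectiveb (fun k => f k)].

Definition rho (G : groupType) (m : nat) (a : 'I_m -> G) (x : G) : nat :=
  #|[pred i | a i == x]|.

Definition mu (G : groupType) (m l : nat) (a : 'I_m -> G) (x : G) : nat :=
  minn l (rho a x).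

(* Kemperman's inequality |AB| >= min(p(G), |A| + |B| - 1), valid in every
   group, is proved by Hamidoune's isoperimetric method.  With 1 in B, work in
   the subgroup K generated by B: a fragment of C is a nonempty X in K whose
   product XC does not cover K, kappa is the least value of |XC| - |X| over the
   fragments of B and of B^-1, and an atom is a smallest fragment attaining
   kappa.  Two atoms that meet are equal, so an atom translated to contain 1 is
   a finite subgroup H: either H = 1 and |B| = kappa + 1, or H and a coset Hb
   are disjoint inside HB, whence p(G) <= |H| <= kappa.  For A in K this gives
   |AB| >= |A| + kappa when AB does not cover K, and |AB| >= |K| >= p(G)
   otherwise; a general A is split along the left cosets of K.
   For the restricted sums, Sigma^(l+1) contains Sigma^l(a') W, where W is the
   set of values of multiplicity greater than l (or a single value if there is
   none) and a' is a with one copy of each element of W removed; Kemperman's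
   inequality and induction on l give the bound. *)

From mathcomp Require Import all_boot.
From mathcomp Require Import finmap boolp zify.
From Stdlib Require Import Classical.
Set Implicit Arguments.
Unset Strict Implicit.
Unset Printing Implicit Defensive.

Local Open Scope fset_scope.
Local Open Scope nat_scope.
Local Open Scope group_scope.

Definition mulfs (G : groupType) (A B : {fset G}) : {fset G} :=
  [fset a * b | a in A, b in B].
Definition invfs (G : groupType) (A : {fset G}) : {fset G} := [fset a^-1 | a in A].

Local Notation "A :*: B" := (mulfs A B) (at level 40, left associativity).

Section ProductSets.
Variable G : groupType.
Implicit Types (A B C : {fset G}) (g y : G).

Lemma mulfsP A B y :
  reflect (exists a b, [/\ a \in A, b \in B & y = a * b]) (y \in A :*: B).
Proof.
apply: (iffP (imfset2P _ _ _ _ _)) => [[a aA [b bB ->]]|[a [b [aA bB ->]]]].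
  by exists a, b.
by exists a => //; exists b.
Qed.

Lemma mem_mulfs A B a b : a \in A -> b \in B -> a * b \in A :*: B.
Proof. by move=> aA bB; apply/mulfsP; exists a, b. Qed.

Lemma mulfsA A B C : A :*: (B :*: C) = A :*: B :*: C.
Proof.
apply/fsetP => y; apply/mulfsP/mulfsP.
  move=> [a [_ [aA /mulfsP[b [c [bB cC ->]]] ->]]].
  by exists (a * b), c; rewrite mulgA mem_mulfs.
move=> [_ [c [/mulfsP[a [b [aA bB ->]]] cC ->]]].
by exists a, (b * c); rewrite mulgA mem_mulfs.
Qed.

Lemma mulfsS A A' B B' : A `<=` A' -> B `<=` B' -> A :*: B `<=` A' :*: B'.
Proof.
move=> /fsubsetP sA /fsubsetP sB; apply/fsubsetP => _ /mulfsP[a [b [aA bB ->]]].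
by rewrite mem_mulfs ?sA ?sB.
Qed.

Lemma mulfsU A A' B : (A `|` A') :*: B = (A :*: B) `|` (A' :*: B).
Proof.
apply/fsetP => y; rewrite in_fsetU; apply/mulfsP/orP.
  by move=> [a [b [+ bB ->]]]; rewrite in_fsetU => /orP[] aA; [left|right];
    rewrite mem_mulfs.
by move=> [] /mulfsP[a [b [aA bB ->]]]; exists a, b; rewrite in_fsetU aA ?orbT.
Qed.

Lemma sub_mulfs1 A B : 1 \in B -> A `<=` A :*: B.
Proof. by move=> B1; apply/fsubsetP => a aA; rewrite -[a]mulg1 mem_mulfs. Qed.

Lemma mem_mulfs1l g A y : (y \in [fset g] :*: A) = (g^-1 * y \in A).
Proof.
apply/mulfsP/idP => [[_ [a [/fset1P-> aA ->]]]|yA]; first by rewrite mulKg.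
by exists g, (g^-1 * y); rewrite fset11 mulVKg.
Qed.

Lemma mem_mulfs1r A g y : (y \in A :*: [fset g]) = (y * g^-1 \in A).
Proof.
apply/mulfsP/idP => [[a [_ [aA /fset1P-> ->]]]|yA]; first by rewrite mulgK.
by exists (y * g^-1), g; rewrite fset11 mulgVK.
Qed.

Lemma card_mulfs1l g A : #|` [fset g] :*: A| = #|` A|.
Proof.
have -> : [fset g] :*: A = [fset g * a | a in A].
  apply/fsetP => y; rewrite mem_mulfs1l; apply/idP/imfsetP => [yA|[a /= aA ->]].
    by exists (g^-1 * y); rewrite ?mulVKg.
  by rewrite mulKg.
by rewrite card_imfset //; apply: mulgI.
Qed.

Lemma card_mulfs1r A g : #|` A :*: [fset g]| = #|` A|.
Proof.
have -> : A :*: [fset g] = [fset a * g | a in A].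
  apply/fsetP => y; rewrite mem_mulfs1r; apply/idP/imfsetP => [yA|[a /= aA ->]].
    by exists (y * g^-1); rewrite ?mulgVK.
  by rewrite mulgK.
by rewrite card_imfset //; apply: mulIg.
Qed.

Lemma invfsP A y : (y \in invfs A) = (y^-1 \in A).
Proof.
apply/imfsetP/idP => [[a /= aA ->]|yA]; first by rewrite invgK.
by exists y^-1; rewrite ?invgK.
Qed.

Lemma invfsK : involutive (@invfs G).
Proof. by move=> A; apply/fsetP => y; rewrite !invfsP invgK. Qed.

Lemma card_invfs A : #|` invfs A| = #|` A|.
Proof. by rewrite card_imfset //; apply: invg_inj. Qed.

Lemma mulfs_submod A B C :
  #|` (A `&` B) :*: C| + #|` (A `|` B) :*: C| <= #|` A :*: C| + #|` B :*: C|.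
Proof.
rewrite -[leqRHS]cardfsUI addnC mulfsU leq_add2l.
by apply: fsubset_leq_card; rewrite fsubsetI !mulfsS ?fsubsetIl ?fsubsetIr.
Qed.

End ProductSets.

Lemma min_opt_le p k : min_opt p k <= k.
Proof. by case: p => //= n; rewrite geq_minr. Qed.

Lemma min_opt_leD p a k : min_opt p (a + k) <= a + min_opt p k.
Proof. by case: p => [n|] /=; lia. Qed.

Lemma min_opt_subadd p a1 a2 b : 0 < b ->
  min_opt p (a1 + a2 + b - 1) <= min_opt p (a1 + b - 1) + min_opt p (a2 + b - 1).
Proof. by case: p => [n|] /=; lia. Qed.

Lemma min_opt_gt0 (G : groupType) p k : is_pG G p -> 0 < k -> 0 < min_opt p k.
Proof.
case: p => [n [[s [[_ _ /hasP[x xs _]] <-]] _]|_] k_gt0 //=.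
by rewrite leq_min k_gt0 andbT; case: s xs.
Qed.

Section Subgroups.
Variable G : groupType.
Implicit Types (B H : {fset G}) (S : {pred G}).

Lemma min_opt_le_subgroup p H k : is_pG G p ->
  group_closed [pred x | x \in H] -> (exists2 x, x \in H & x != 1) ->
  min_opt p k <= #|` H|.
Proof.
move=> pG H_group [x xH x_neq1].
have H_nontriv : fin_nontriv_subgroup (enum_fset H).
  by split; [exact: fset_uniq | exact: H_group | apply/hasP; exists x].
case: p pG => [n [_ /(_ _ H_nontriv) n_le]|/(_ _ H_nontriv)//].
by apply: leq_trans n_le; rewrite geq_minl.
Qed.

Lemma fset_nontrivial H : 1 \in H -> 1 < #|` H| -> exists2 x, x \in H & x != 1.
Proof.
move=> H1; rewrite (cardfsD1 1) H1 ltnS cardfs_gt0 => /fset0Pn[x].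
by rewrite in_fsetD1 => /andP[x_neq1 xH]; exists x.
Qed.

Lemma group_closed_mulfs S A C : group_closed S ->
  {subset A <= S} -> {subset C <= S} -> {subset A :*: C <= S}.
Proof.
move=> /group_closedM S_mul AS CS _ /mulfsP[a [c [aA cC ->]]].
by apply: S_mul; [apply: AS | apply: CS].
Qed.

Lemma invfs_subset S B :
  group_closed S -> {subset B <= S} -> {subset invfs B <= S}.
Proof.
by move=> S_group BS b; rewrite invfsP => /BS/(group_closedV S_group); rewrite invgK.
Qed.

Definition gen_pred B : {pred G} :=
  [pred g | `[< forall S, group_closed S -> {subset B <= S} -> g \in S >]].

Lemma gen_group_closed B : group_closed (gen_pred B).
Proof.
split; first by apply/asboolP => S [].
move=> x y /asboolP xB /asboolP yB; apply/asboolP => S S_group BS.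
by case: (S_group) => _; apply; [apply: xB | apply: yB].
Qed.

Lemma sub_gen B : {subset B <= gen_pred B}.
Proof. by move=> b bB; apply/asboolP => S _; apply. Qed.

Lemma gen_min B S : group_closed S -> {subset B <= S} -> {subset gen_pred B <= S}.
Proof. by move=> S_group BS g /asboolP; apply. Qed.

Lemma mulfs_cosets_disjoint K B X Y a : group_closed K -> {subset B <= K} ->
  {in X, forall x, a^-1 * x \in K} -> {in Y, forall y, a^-1 * y \notin K} ->
  X :*: B `&` Y :*: B = fset0.
Proof.
move=> K_group BK XK YK; apply/fsetP => z; rewrite in_fsetI in_fset0.
apply/negP => /andP[/mulfsP[x [b [xX bB ->]]] /mulfsP[y [b' [yY b'B e]]]].
move/negP: (YK y yY); apply; have -> : y = x * b / b' by rewrite e mulgK.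
rewrite !mulgA -(mulgA (a^-1 * x)); apply: (group_closedM K_group); first exact: XK.
by case: K_group => _; apply; apply: BK.
Qed.

End Subgroups.

Definition fragment (G : groupType) (K : {pred G}) (C X : {fset G}) : Prop :=
  [/\ X != fset0, {subset X <= K} & ~ {subset K <= X :*: C}].

Section Fragments.
Variables (G : groupType) (K : {pred G}) (B : {fset G}).
Hypotheses (K_group : group_closed K) (B1 : 1 \in B) (BK : {subset B <= K}).
Implicit Types (C U X Y : {fset G}).

Lemma fragmentS C X Y : fragment K C X -> Y `<=` X -> Y != fset0 -> fragment K C Y.
Proof.
move=> [_ XK X_frag] YX Y_neq0; split=> // [y /(fsubsetP YX)/XK //|KY].
by apply: X_frag => k /KY /(fsubsetP (mulfsS YX (fsubset_refl C))).
Qed.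

Lemma fragment_mull g C X :
  g \in K -> fragment K C X -> fragment K C ([fset g] :*: X).
Proof.
move=> gK [X_neq0 XK X_frag]; split.
- by rewrite -cardfs_gt0 card_mulfs1l cardfs_gt0.
- move=> y; rewrite mem_mulfs1l => /XK gyK.
  by rewrite -[y](mulVKg g); apply: (group_closedM K_group).
- move=> KgX; apply: X_frag => k kK.
  have /KgX : g * k \in K by apply: (group_closedM K_group).
  by rewrite -mulfsA mem_mulfs1l mulKg.
Qed.

Lemma complement_fragment U X : {subset U <= K} -> {subset K <= U :*: B} ->
  X `<=` U -> fragment K B X ->
  fragment K (invfs B) (U :*: B `\` X :*: B) /\
  #|` (U :*: B `\` X :*: B) :*: invfs B| <= #|` U :*: B| - #|` X|.
Proof.
move=> UK KUB XU [X_neq0 XK X_frag].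
have UBK := group_closed_mulfs K_group UK BK.
have B'K := invfs_subset K_group BK.
have outX : {subset (U :*: B `\` X :*: B) :*: invfs B <= U :*: B `\` X}.
  move=> _ /mulfsP[y [b [+ bB' ->]]]; rewrite !in_fsetD => /andP[yXB yUB].
  apply/andP; split.
    by apply: contra yXB => ybX; rewrite -[y](mulgK b) mem_mulfs // -invfsP.
  by apply/KUB/(group_closedM K_group); [apply: UBK | apply: B'K].
split; last first.
  rewrite -(cardfsDS (fsubset_trans XU (sub_mulfs1 U B1))).
  exact/fsubset_leq_card/fsubsetP.
have [x xX] := fset0Pn _ X_neq0.
split.
- rewrite fsetD_eq0; apply/negP => /fsubsetP UB_XB.
  by apply: X_frag => k /KUB/UB_XB.
- by move=> y; rewrite in_fsetD => /andP[_ /UBK].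
- by move=> /(_ x (XK x xX))/outX; rewrite in_fsetD xX.
Qed.

End Fragments.

Section Atoms.
Variables (G : groupType) (K : {pred G}) (B : {fset G}) (kap al : nat).
Hypotheses (K_group : group_closed K) (B1 : 1 \in B) (BK : {subset B <= K}).
Hypothesis K_gen :
  forall S : {pred G}, group_closed S -> {subset B <= S} -> {subset K <= S}.
Local Notation pair := [:: B; invfs B].
Hypothesis gap_min : forall C X, C \in pair -> fragment K C X ->
  kap + #|` X| <= #|` X :*: C|.
Hypothesis atom_min : forall C X, C \in pair -> fragment K C X ->
  #|` X :*: C| = #|` X| + kap -> al <= #|` X|.
Implicit Types (C H X Y : {fset G}).

Lemma pair_inv C : C \in pair -> invfs C \in pair.
Proof. by rewrite !mem_seq2 => /orP[]/eqP->; rewrite ?invfsK eqxx ?orbT. Qed.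

Lemma pair1 C : C \in pair -> 1 \in C.
Proof. by rewrite mem_seq2 => /orP[]/eqP->; rewrite // invfsP invg1. Qed.

Lemma pair_sub C : C \in pair -> {subset C <= K}.
Proof. by rewrite mem_seq2 => /orP[]/eqP->; last apply: invfs_subset. Qed.

Lemma pair_gen C S : C \in pair ->
  group_closed S -> {subset C <= S} -> {subset K <= S}.
Proof.
rewrite mem_seq2 => /orP[]/eqP-> S_group; first exact: K_gen.
by move/(invfs_subset S_group); rewrite invfsK; apply: K_gen.
Qed.

Lemma card_pair C : C \in pair -> #|` C| = #|` B|.
Proof. by rewrite mem_seq2 => /orP[]/eqP->; rewrite ?card_invfs. Qed.

Variable C : {fset G}.
Hypothesis C_pair : C \in pair.

Definition atom X := [/\ fragment K C X, #|` X :*: C| = #|` X| + kap & #|` X| = al].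

Lemma atom_mull g X : g \in K -> atom X -> atom ([fset g] :*: X).
Proof.
move=> gK [X_frag XC_card X_card].
split; first exact: fragment_mull.
  by rewrite -mulfsA !card_mulfs1l.
by rewrite card_mulfs1l.
Qed.

(* Submodularity of [X |-> |XC|] makes [X :&: Y] critical when [X :|: Y] is a
   fragment.  Otherwise [(X :|: Y) C] covers [K], and the complement of [XC]
   in it is a critical fragment of [C^-1], of size at least [al]: this makes
   [(X :|: Y) C] too large. *)
Lemma atoms_meet_sub X Y x : atom X -> atom Y -> x \in X -> x \in Y -> X `<=` Y.
Proof.
move=> [X_frag XC_card X_card] [Y_frag YC_card Y_card] xX xY.
have [_ XK _] := X_frag; have [_ YK _] := Y_frag.
have xI : x \in X `&` Y by rewrite in_fsetI xX.
have I_frag : fragment K C (X `&` Y).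
  by apply: fragmentS X_frag (fsubsetIl X Y) _; apply/fset0Pn; exists x.
have IC_card := gap_min C_pair I_frag.
have I_gt0 : 0 < #|` X `&` Y| by rewrite cardfs_gt0; apply/fset0Pn; exists x.
have submod := mulfs_submod X Y C.
have UK : {subset X `|` Y <= K} by move=> y; rewrite in_fsetU => /orP[/XK|/YK].
have [KUC | KUC_frag] := classic {subset K <= (X `|` Y) :*: C}.
  have [X'_frag X'C'_card] := complement_fragment K_group (pair1 C_pair)
    (pair_sub C_pair) UK KUC (fsubsetUl X Y) X_frag.
  have X'_card := cardfsDS (mulfsS (fsubsetUl X Y) (fsubset_refl C)).
  have X'_gap := gap_min (pair_inv C_pair) X'_frag.
  have XC_UC := fsubset_leq_card (mulfsS (fsubsetUl X Y) (fsubset_refl C)).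
  have X'_crit : #|` ((X `|` Y) :*: C `\` X :*: C) :*: invfs C| =
                 #|` (X `|` Y) :*: C `\` X :*: C| + kap by lia.
  by have := atom_min (pair_inv C_pair) X'_frag X'_crit; lia.
have U_frag : fragment K C (X `|` Y).
  by split=> //; apply/fset0Pn; exists x; rewrite in_fsetU xX.
have UC_card := gap_min C_pair U_frag.
have UI_card := cardfsUI X Y.
have I_crit : #|` (X `&` Y) :*: C| = #|` X `&` Y| + kap by lia.
have I_card := atom_min C_pair I_frag I_crit.
have/eqP <- : X `&` Y == X by rewrite eqEfcard fsubsetIl X_card.
exact: fsubsetIr.
Qed.

Lemma atom_group H : atom H -> 1 \in H -> group_closed [pred x | x \in H].
Proof.
move=> H_atom H1; have [[_ HK _] _ _] := H_atom.
have divH h g : h \in H -> g \in H -> h^-1 * g \in H.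
  move=> hH gH; have h'K := group_closedV K_group (HK h hH).
  have hH_H : [fset h^-1] :*: H `<=` H.
    apply: atoms_meet_sub (atom_mull h'K H_atom) H_atom _ H1.
    by rewrite mem_mulfs1l invgK mulg1.
  by apply: (fsubsetP hH_H); rewrite mem_mulfs1l invgK mulVKg.
have invH h : h \in H -> h^-1 \in H by move=> hH; rewrite -[h^-1]mulg1 divH.
by split=> // x y xH yH /=; rewrite -[x]invgK divH ?invH.
Qed.

Lemma atom_bound p H0 : is_pG G p -> atom H0 -> min_opt p (#|` B| - 1) <= kap.
Proof.
move=> pG H0_atom; have [[H0_neq0 H0K _] _ _] := H0_atom.
have [x xH0] := fset0Pn _ H0_neq0.
pose H := [fset x^-1] :*: H0.
have H_atom : atom H by apply/atom_mull/H0_atom/(group_closedV K_group)/H0K.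
have H1 : 1 \in H by rewrite mem_mulfs1l invgK mulg1.
have H_group := atom_group H_atom H1.
have [[_ _ H_frag] HC_card _] := H_atom.
rewrite -(card_pair C_pair).
have [H_le1 | H_gt1] := leqP #|` H| 1.
  have H_eq1 : H = [fset 1].
    by apply/eqP; rewrite eq_sym eqEfcard fsub1set H1 cardfs1.
  move: HC_card; rewrite H_eq1 card_mulfs1l cardfs1 => ->.
  by rewrite addKn min_opt_le.
have [c cC cH] : exists2 c, c \in C & c \notin H.
  apply: NNPP => CH; apply: H_frag => k /(pair_gen C_pair H_group) kH.
  apply/(fsubsetP (sub_mulfs1 H (pair1 C_pair)))/kH => c cC.
  by apply: NNPP => cH; apply: CH; exists c => //; apply/negP.
have H_Hc : H `&` H :*: [fset c] = fset0.
  apply/fsetP => y; rewrite in_fsetI mem_mulfs1r in_fset0.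
  apply/negP => /andP[yH ycH]; move/negP: cH; apply.
  have := group_closedM H_group (group_closedV H_group ycH) yH.
  by rewrite invgF mulgVK.
have HHc_HC : H `|` H :*: [fset c] `<=` H :*: C.
  by rewrite fsubUset sub_mulfs1 ?pair1 // mulfsS // fsub1set.
have := cardfsUI H (H :*: [fset c]); rewrite H_Hc cardfs0 card_mulfs1r.
have := fsubset_leq_card HHc_HC.
have := min_opt_le_subgroup (#|` C| - 1) pG H_group (fset_nontrivial H1 H_gt1).
lia.
Qed.

End Atoms.

Section Kemperman.
Variables (G : groupType) (p : option nat).
Hypothesis pG : is_pG G p.
Implicit Types (A B C H X : {fset G}).

Section Generated.
Variables (K : {pred G}) (B : {fset G}).
Hypotheses (K_group : group_closed K) (B1 : 1 \in B) (BK : {subset B <= K}).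
Hypothesis K_gen :
  forall S : {pred G}, group_closed S -> {subset B <= S} -> {subset K <= S}.

Lemma fragment_card_mulfs A :
  fragment K B A -> min_opt p (#|` B| - 1) + #|` A| <= #|` A :*: B|.
Proof.
pose gap n := `[< exists C X,
  [/\ C \in [:: B; invfs B], fragment K C X & #|` X :*: C| = #|` X| + n] >].
have gapP C X : C \in [:: B; invfs B] -> fragment K C X ->
    gap (#|` X :*: C| - #|` X|).
  move=> C_pair X_frag; apply/asboolP; exists C, X; split=> //.
  by rewrite subnKC // fsubset_leq_card // sub_mulfs1 // (pair1 B1).
move=> A_frag; have A_gap := gapP B A (mem_head _ _) A_frag.
case: (ex_minnP (ex_intro gap _ A_gap)) => kap.
move=> /asboolP[C0 [X0 [C0_pair X0_frag X0_crit]]] kap_min.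
have gap_min C X : C \in [:: B; invfs B] -> fragment K C X ->
    kap + #|` X| <= #|` X :*: C|.
  move=> C_pair X_frag; have := kap_min _ (gapP C X C_pair X_frag).
  by have := fsubset_leq_card (sub_mulfs1 X (pair1 B1 C_pair)); lia.
pose crit s := `[< exists C X, [/\ C \in [:: B; invfs B], fragment K C X,
  #|` X :*: C| = #|` X| + kap & #|` X| = s] >].
have crit_ex : exists s, crit s by exists #|` X0|; apply/asboolP; exists C0, X0.
case: (ex_minnP crit_ex) => al /asboolP[C [H [C_pair H_frag H_crit H_card]]] al_min.
have atom_min C' X : C' \in [:: B; invfs B] -> fragment K C' X ->
    #|` X :*: C'| = #|` X| + kap -> al <= #|` X|.
  by move=> C'_pair X_frag X_crit; apply: al_min; apply/asboolP; exists C', X.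
have := atom_bound K_group B1 BK K_gen gap_min atom_min C_pair pG
  (And3 H_frag H_crit H_card).
by have := gap_min B A (mem_head _ _) A_frag; lia.
Qed.

Lemma Kemperman_gen A : {subset A <= K} -> A != fset0 ->
  min_opt p (#|` A| + #|` B| - 1) <= #|` A :*: B|.
Proof.
move=> AK A_neq0; have AB_A := fsubset_leq_card (sub_mulfs1 A B1).
have [B_le1 | B_gt1] := leqP #|` B| 1.
  by apply: leq_trans (min_opt_le _ _) _; lia.
have [KAB | KAB_frag] := classic {subset K <= A :*: B}; last first.
  have := fragment_card_mulfs (And3 A_neq0 AK KAB_frag).
  have := min_opt_leD p #|` A| (#|` B| - 1).
  by rewrite addnBA ?(ltnW B_gt1) //; lia.
pose KA := [fset g in A :*: B | g \in K].
have KAE g : (g \in KA) = (g \in K).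
  by rewrite !inE /=; apply/andP/idP => [[]//|gK]; split => //; apply: KAB.
have KA_group : group_closed [pred g | g \in KA].
  by case: K_group => K1 K_div; split=> [|x y]; rewrite /= !KAE //; apply: K_div.
have [b bB b_neq1] := fset_nontrivial B1 B_gt1.
have KA_nontriv : exists2 g, g \in KA & g != 1 by exists b; rewrite ?KAE ?BK.
apply: leq_trans (min_opt_le_subgroup _ pG KA_group KA_nontriv) _.
by apply/fsubset_leq_card/fsubsetP => g; rewrite inE => /andP[].
Qed.

Lemma Kemperman_coset a A : {in A, forall x, a^-1 * x \in K} -> A != fset0 ->
  min_opt p (#|` A| + #|` B| - 1) <= #|` A :*: B|.
Proof.
move=> AK A_neq0.
rewrite -(card_mulfs1l a^-1) -[leqRHS](card_mulfs1l a^-1) mulfsA.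
apply: Kemperman_gen => [y|].
  by rewrite mem_mulfs1l invgK => /AK; rewrite mulKg.
by rewrite -cardfs_gt0 card_mulfs1l cardfs_gt0.
Qed.

End Generated.

Lemma Kemperman_mulfs1 A B : 1 \in B -> A != fset0 ->
  min_opt p (#|` A| + #|` B| - 1) <= #|` A :*: B|.
Proof.
move=> B1; elim: {A}_.+1 {-2}A (ltnSn #|` A|) => // n IH A A_lt A_neq0.
have [a aA] := fset0Pn _ A_neq0.
pose K := gen_pred B; have K_group : group_closed K := gen_group_closed B.
pose A1 := [fset x in A | a^-1 * x \in K]; pose A2 := A `\` A1.
have A1E x : (x \in A1) = (x \in A) && (a^-1 * x \in K) by rewrite !inE.
have A1A : A1 `<=` A by apply/fsubsetP => x; rewrite A1E => /andP[].
have aA1 : a \in A1 by rewrite A1E aA mulVg; case: K_group.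
have A1K : {in A1, forall x, a^-1 * x \in K} by move=> x; rewrite A1E => /andP[].
have A2K : {in A2, forall x, a^-1 * x \notin K}.
  by move=> x; rewrite in_fsetD A1E; case: (x \in A); rewrite /= ?andbT ?andbF.
have A1_neq0 : A1 != fset0 by apply/fset0Pn; exists a.
have A1_bound :=
  Kemperman_coset K_group B1 (@sub_gen _ B) (@gen_min _ B) A1K A1_neq0.
have A_card : #|` A1| + #|` A2| = #|` A|.
  by rewrite cardfsDS // subnKC // fsubset_leq_card.
have A12_AB : #|` A1 :*: B| + #|` A2 :*: B| <= #|` A :*: B|.
  rewrite -cardfsUI (mulfs_cosets_disjoint K_group (@sub_gen _ B) A1K A2K).
  rewrite cardfs0 addn0 -mulfsU fsubset_leq_card // mulfsS //.
  by rewrite fsubUset A1A fsubDset fsubsetUr.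
have [A2_eq0 | A2_neq0] := eqVneq A2 fset0.
  by move: A_card; rewrite A2_eq0 cardfs0 addn0 => <-; lia.
have A1_gt0 : 0 < #|` A1| by rewrite cardfs_gt0.
have /IH/(_ A2_neq0) : #|` A2| < n by lia.
have B_gt0 : 0 < #|` B| by rewrite cardfs_gt0; apply/fset0Pn; exists 1.
by have := min_opt_subadd p #|` A1| #|` A2| B_gt0; rewrite A_card; lia.
Qed.

Theorem Kemperman_mulfs A B : A != fset0 -> B != fset0 ->
  min_opt p (#|` A| + #|` B| - 1) <= #|` A :*: B|.
Proof.
move=> A_neq0 /fset0Pn[b bB].
have B1 : 1 \in B :*: [fset b^-1] by rewrite mem_mulfs1r invgK mul1g.
by have := Kemperman_mulfs1 B1 A_neq0; rewrite mulfsA !card_mulfs1r.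
Qed.

End Kemperman.

Section MultisetSums.
Variable T : eqType.
Implicit Types (V : seq T) (c f : T -> nat) (P : pred T).

Lemma minn_sum_le V f l : minn l (\sum_(x <- V) f x) <= \sum_(x <- V) minn l (f x).
Proof. by elim: V => [|x V IH]; rewrite ?big_nil ?big_cons; lia. Qed.

Lemma count_gt_mul_le_sum V c l : l.+1 * count (fun x => l < c x) V <= \sum_(x <- V) c x.
Proof.
rewrite -sum1_count big_distrr big_mkcond /= leq_sum // => x _.
by case: ifP => //; rewrite muln1.
Qed.

Lemma sum_subn_count V c P : (forall x, P x -> 0 < c x) ->
  \sum_(x <- V) (c x - P x) + count P V = \sum_(x <- V) c x.
Proof.
move=> P_pos; rewrite -sum1_count [X in _ + X]big_mkcond -big_split /=.
by apply: eq_bigr => x _; case: (P x) (P_pos x) => /= [/(_ isT)|_]; lia.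
Qed.

Lemma sum_minn_subn_count V c P l : (forall x, P x -> 0 < c x) ->
  (forall x, x \in V -> ~~ P x -> c x <= l) ->
  \sum_(x <- V) minn l (c x - P x) + count P V = \sum_(x <- V) minn l.+1 (c x).
Proof.
move=> P_pos notP_le; rewrite -sum1_count [X in _ + X]big_mkcond -big_split /=.
apply: eq_big_seq => x xV; have := notP_le x xV.
by case: (P x) (P_pos x) => /= [/(_ isT) + _|_ /(_ isT)]; lia.
Qed.

Lemma exists_peel_pred V c l : uniq V -> l < \sum_(x <- V) c x ->
  exists P, [/\ forall x, P x -> 0 < c x, forall x, x \in V -> ~~ P x -> c x <= l,
                l + count P V <= \sum_(x <- V) c x & has P V].
Proof.
move=> V_uniq l_lt.
have [c_big | /hasPn c_small] := boolP (has (fun x => l < c x) V).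
  exists (fun x => l < c x); split=> // [x|x _|]; [lia | by rewrite -leqNgt |].
  have := count_gt_mul_le_sum V c l; move: c_big; rewrite has_count.
  by move: (count _ V) (\sum_(x <- V) c x) => k s; nia.
have [x0 x0V cx0_gt0] : exists2 x0, x0 \in V & 0 < c x0.
  apply/hasP; apply: contraLR l_lt => /hasPn c0; rewrite -leqNgt big1_seq //.
  by move=> x /andP[_ /c0]; rewrite lt0n negbK => /eqP.
exists (pred1 x0); split=> [x /eqP-> //|x xV _||].
- by rewrite leqNgt c_small.
- by rewrite (count_uniq_mem _ V_uniq) x0V addn1.
- by apply/hasP; exists x0 => /=.
Qed.

End MultisetSums.

Section RestrictedProducts.
Variables (G : groupType) (p : option nat).
Hypothesis pG : is_pG G p.
Implicit Types (V : seq G) (c : G -> nat).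

Definition restricted_prod c l (g : G) : Prop :=
  exists t : seq G,
    [/\ size t = l, forall x, count_mem x t <= c x & \prod_(x <- t) x = g].

Lemma restricted_prod_mulr c c' l g w : (forall x, c' x + (x == w) <= c x) ->
  restricted_prod c' l g -> restricted_prod c l.+1 (g * w).
Proof.
move=> c'_le [t [t_size t_count <-]]; exists (rcons t w); split.
- by rewrite size_rcons t_size.
- move=> x; rewrite -cats1 count_cat /= addn0 eq_sym.
  by apply: leq_trans (c'_le x); rewrite leq_add2r.
- by rewrite -cats1 big_cat big_seq1.
Qed.

Lemma restricted_prods_card V c l : uniq V -> l <= \sum_(x <- V) c x ->
  exists L : {fset G}, (forall g, g \in L -> restricted_prod c l g) /\
    min_opt p (\sum_(x <- V) minn l (c x) - l + 1) <= #|` L|.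
Proof.
move=> V_uniq; elim: l c => [|l IH] c l_le.
  exists [fset 1]; split=> [g /fset1P-> | ]; first by exists [::]; rewrite big_nil.
  by rewrite big1 ?cardfs1 ?min_opt_le // => x; rewrite min0n.
have [P [P_pos notP_le P_count P_has]] := exists_peel_pred V_uniq l_le.
have {}P_count : l + count P V <= \sum_(x <- V) c x := P_count.
pose c' x := c x - P x.
have c'_sum : \sum_(x <- V) c' x + count P V = \sum_(x <- V) c x :=
  sum_subn_count V P_pos.
have [|L' [L'_prod L'_card]] := IH c'; first lia.
have c'_minn := minn_sum_le V c' l.
pose W := [fset x in [seq x <- V | P x]].
have WE x : (x \in W) = (x \in V) && P x by rewrite !inE mem_filter andbC.
have W_card : #|` W| = count P V.
  by rewrite card_fseq undup_id ?filter_uniq // size_filter.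
have W_neq0 : W != fset0.
  by move/hasP: P_has => [x xV Px]; apply/fset0Pn; exists x; rewrite WE xV.
have L'_neq0 : L' != fset0.
  by rewrite -cardfs_gt0; apply: leq_trans L'_card; apply: min_opt_gt0 pG _; lia.
exists (L' :*: W); split=> [_ /mulfsP[g [w [/L'_prod g_prod + ->]]] |].
  rewrite WE => /andP[_ Pw]; apply: restricted_prod_mulr g_prod => x.
  rewrite /c'; case: (eqVneq x w) => [->|_]; last by rewrite addn0 leq_subr.
  by rewrite Pw subn1 addn1 prednK ?P_pos.
have c'_minn_count : \sum_(x <- V) minn l (c' x) + count P V =
                     \sum_(x <- V) minn l.+1 (c x).
  exact: sum_minn_subn_count P_pos notP_le.
have := Kemperman_mulfs pG L'_neq0 W_neq0; rewrite W_card -c'_minn_count.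
have count_gt0 : 0 < count P V by rewrite -has_count.
have c'_big : l <= \sum_(x <- V) minn l (c' x).
  by apply: leq_trans c'_minn; rewrite leq_min leqnn /=; lia.
move: L'_card c'_big count_gt0.
move: (count P V) (\sum_(x <- V) minn l (c' x)) => k s.
by case: (p) => [n|] /=; lia.
Qed.

End RestrictedProducts.

Lemma sum_count_mem_undup (T : eqType) (s : seq T) :
  \sum_(x <- undup s) count_mem x s = size s.
Proof.
rewrite -(perm_size (perm_count_undup s)) size_flatten /shape -map_comp.
rewrite sumnE big_map.
by apply: eq_bigr => x _; rewrite /= size_nseq.
Qed.

Lemma sub_multiset_indices (I : finType) (T : eqType) (a : I -> T) (t : seq T)
    (D : {set I}) :
  (forall x, count_mem x t <= #|[set i in D | a i == x]|) ->
  exists f : seq I, [/\ uniq f, {subset f <= D} & map a f = t].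
Proof.
elim: t D => [|x t IH] D t_le; first by exists [::].
have /card_gt0P[i] : 0 < #|[set i in D | a i == x]|.
  by apply: leq_trans (t_le x); rewrite /= eqxx.
rewrite inE => /andP[iD /eqP aix].
have [y|f [f_uniq fD f_t]] := IH (D :\ i).
  have -> : [set j in D :\ i | a j == y] = [set j in D | a j == y] :\ i.
    by apply/setP => j; rewrite !inE andbA.
  have := t_le y; rewrite (cardsD1 i) inE iD aix /=.
  by case: eqVneq => [<-|_] /=; lia.
exists (i :: f); split=> [|j|]; last by rewrite /= aix f_t.
  by rewrite /= f_uniq andbT; apply/negP => /fD; rewrite !inE eqxx.
by rewrite in_cons => /predU1P[->//|/fD]; rewrite !inE => /andP[].
Qed.

Lemma restricted_prod_sigma_l (G : groupType) m l (a : 'I_m -> G) g :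
  restricted_prod (rho a) l g -> g \in sigma_l l a.
Proof.
move=> [t [t_size t_count <-]].
have [|f [f_uniq _ f_t]] := @sub_multiset_indices _ _ a t setT.
  move=> x; apply: leq_trans (t_count x) _.
  by apply/eq_leq/eq_card => i; rewrite !inE.
have f_size : size f == l by rewrite -t_size -f_t size_map.
pose tf := Tuple f_size.
rewrite mem_undup; apply/mapP; exists [ffun k => tnth tf k].
  rewrite mem_filter mem_enum andbT; apply/injectiveP => k1 k2; rewrite !ffunE.
  by apply/tuple_uniqP.
rewrite -f_t big_map (big_tuple _ _ tf); apply: eq_bigr => k _.
by rewrite ffunE.
Qed.

Theorem theorem6p2 (G : groupType) (l m : nat) (a : 'I_m -> G)
    (p : option nat) :
  0 < l -> l <= m -> @is_pG G p ->
  min_opt p ((\sum_(x <- undup (codom a)) mu l a x) - l + 1)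
    <= size (sigma_l l a).
Proof.
move=> _ l_le_m pG.
have rhoE x : rho a x = count_mem x (codom a).
  by rewrite /rho cardE size_filter codomE count_map enumT.
have rho_sum : \sum_(x <- undup (codom a)) rho a x = m.
  by under eq_bigr do rewrite rhoE; rewrite sum_count_mem_undup size_codom card_ord.
have l_le_sum : l <= \sum_(x <- undup (codom a)) rho a x by rewrite rho_sum.
have [L [L_prod L_card]] := restricted_prods_card pG (undup_uniq _) l_le_sum.
apply: leq_trans L_card (uniq_leq_size (fset_uniq L) _) => g /L_prod.
exact: restricted_prod_sigma_l.
Qed.
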